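(* In the setting of the context, fix $j\in\{1,2,3\}$ and let $A_1:=\Lambda_g$, $A_2=A_3:=\Lambda$. Assume there exists $\lambda_0\in A_j$ with $\Phi_j(\lambda_0)<1$, and that $\widehat X_{\lambda_k}\to+\infty$ in probability as $k\to\infty$ for every sequence $(\lambda_k)\subset A_j$ with $|\lambda_k|\to\infty$. Then there exists $M>0$ such that $$\inf_{\lambda\in A_j}\Phi_j(\lambda)=\inf_{\lambda\in A_j,\ |\lambda|\le M}\Phi_j(\lambda).$$
   Context: Let $X$ be a real random variable with continuous c.d.f. $F_X$ and $\mathcal X_n=(X_1,\dots,X_n)$ a random vector on the same probability space. Let $\Lambda\subseteq\mathbb R^n$, $g:\Lambda\times\mathbb R^n\to\mathbb R$ measurable, $\widehat X_\lambda:=g(\lambda,\mathcal X_n)$, and $\Lambda_g:=\{\lambda\in\Lambda:F_X(\widehat X_\lambda)\text{ is uniform on }(0,1)\}$. $|\cdot|$ is the Euclidean norm. For $\gamma>0$ define $\Phi_1(\lambda)=\mathbf E F_X(X\vee\widehat X_\lambda)$, $\Phi_2(\lambda)=2\,\mathbf E F_X(X\vee\widehat X_\lambda)-\mathbf E F_X(\widehat X_\lambda)$, $\Phi_3(\lambda)=\Phi_2(\lambda)+\gamma\big[\mathbf E F_X^2(\widehat X_\lambda)-\mathbf E[F_X(\widehat X_\lambda)\vee Y_\lambda]\big]$, where $Y_\lambda$ is a copy of $F_X(\widehat X_\lambda)$ independent of $F_X(\widehat X_\lambda)$, and $a\vee b=\max\{a,b\}$. *)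

From HB Require Import structures.
From mathcomp Require Import all_boot all_order all_algebra.
From mathcomp Require Import all_classical all_reals all_analysis.
Set Implicit Arguments. Unset Strict Implicit. Unset Printing Implicit Defensive.
Import Order.TTheory GRing.Theory Num.Theory.
Import numFieldNormedType.Exports.
Local Open Scope classical_set_scope.
Local Open Scope ring_scope.

Section defs.
Context {d : measure_display} {T : measurableType d} {R : realType}.
Variable P : probability T R.

(* c.d.f. of a real function X on the probability space: F_X(r) = P[X <= r]
   (this is what the library's [cdf X r] unfolds to, made real-valued). *)
Definition Fcdf (X : T -> R) (r : R) : R := fine (P (X @^-1` `]-oo, r])).

(* Euclidean norm on R^n (represented as n.-tuple R, with its product
   Borel sigma-algebra) *)
Definition enorm {n : nat} (l : n.-tuple R) : R :=
  Num.sqrt (\sum_(i < n) tnth l i ^+ 2).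

(* measurability of f : D -> R for the trace sigma-algebra on D *)
Definition measurable_on {d' : measure_display} {U : measurableType d'}
  (D : set U) (f : U -> R) : Prop :=
  forall B : set R, measurable B ->
    exists C : set U, measurable C /\ D `&` f @^-1` B = D `&` C.

Definition Xhat {n : nat} (g : n.-tuple R * n.-tuple R -> R)
  (Xn : T -> n.-tuple R) (l : n.-tuple R) : T -> R :=
  fun w => g (l, Xn w).

Definition Lam_g {n : nat} (X : T -> R) (Xn : T -> n.-tuple R)
  (g : n.-tuple R * n.-tuple R -> R) (Lam : set (n.-tuple R)) :
  set (n.-tuple R) :=
  [set l | Lam l /\ forall A : set R, measurable A ->
     P ((Fcdf X \o Xhat g Xn l) @^-1` A) = uniform_prob (@ltr01 R) A].

Local Open Scope ereal_scope.

Definition Phi1 {n : nat} (X : T -> R) (Xn : T -> n.-tuple R)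
  (g : n.-tuple R * n.-tuple R -> R) (l : n.-tuple R) : \bar R :=
  \int[P]_w (Fcdf X (Num.max (X w) (Xhat g Xn l w)))%:E.

Definition Phi2 {n : nat} (X : T -> R) (Xn : T -> n.-tuple R)
  (g : n.-tuple R * n.-tuple R -> R) (l : n.-tuple R) : \bar R :=
  2%:E * Phi1 X Xn g l - \int[P]_w (Fcdf X (Xhat g Xn l w))%:E.

(* E[F_X(\hat X_l) v Y_l] with Y_l an independent copy of F_X(\hat X_l):
   computed on the product space (T x T, P (x) P), i.e. as the double integral *)
Definition Phi3 {n : nat} (gamma : R) (X : T -> R) (Xn : T -> n.-tuple R)
  (g : n.-tuple R * n.-tuple R -> R) (l : n.-tuple R) : \bar R :=
  Phi2 X Xn g l + gamma%:E *
    (\int[P]_w ((Fcdf X (Xhat g Xn l w)) ^+ 2)%:E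
     - \int[P]_w \int[P]_w'
         (Num.max (Fcdf X (Xhat g Xn l w)) (Fcdf X (Xhat g Xn l w')))%:E).

Definition Phi {n : nat} (j : nat) (gamma : R) (X : T -> R) (Xn : T -> n.-tuple R)
  (g : n.-tuple R * n.-tuple R -> R) : n.-tuple R -> \bar R :=
  match j with
  | 1%N => Phi1 X Xn g
  | 2%N => Phi2 X Xn g
  | _ => Phi3 gamma X Xn g
  end.

Definition Aset {n : nat} (j : nat) (X : T -> R) (Xn : T -> n.-tuple R)
  (g : n.-tuple R * n.-tuple R -> R) (Lam : set (n.-tuple R)) : set (n.-tuple R) :=
  if j == 1%N then Lam_g X Xn g Lam else Lam.

End defs.

From HB Require Import structures.
From mathcomp Require Import all_boot all_order all_algebra.
From mathcomp Require Import all_classical all_reals all_analysis.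
From mathcomp Require Import measurable_realfun ring lra.
Set Implicit Arguments. Unset Strict Implicit. Unset Printing Implicit Defensive.
Import Order.TTheory GRing.Theory Num.Theory.
Import numFieldNormedType.Exports.
Local Open Scope classical_set_scope.
Local Open Scope ring_scope.

(* If F_X(M) >= 1 - eta and P[\hat X_lambda <= M] <= eta, then F_X(X v \hat X_lambda)
   and F_X(\hat X_lambda)^2 are at least (1 - eta)^2 outside an event of probability at
   most eta, while every other term of Phi_j is the expectation of a quantity in [0, 1];
   hence Phi_j(lambda) >= 1 - (4 + 3 gamma) eta.  As \hat X_lambda -> +oo in probability
   when |lambda| -> oo, Phi_j therefore eventually exceeds every value below 1, in
   particular Phi_j(lambda_0).  So outside a large ball Phi_j stays above Phi_j(lambda_0),
   and the infimum over A_j is the infimum over that ball. *)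

Section cdf_of_measurable_function.
Context d (T : measurableType d) (R : realType) (P : probability T R) (X : T -> R).
Hypothesis mX : measurable_fun setT X.

Let XRV : {RV P >-> R} := HB.pack X (isMeasurableFun.Build _ _ _ _ X mX).

Let FcdfE r : (Fcdf P X r)%:E = cdf XRV r.
Proof.
rewrite /Fcdf fineK//; apply: fin_num_measure.
by rewrite -[X @^-1` _]setTI; exact: mX.
Qed.

Lemma Fcdf_ge0 r : 0 <= Fcdf P X r.
Proof. by rewrite -lee_fin FcdfE cdf_ge0. Qed.

Lemma Fcdf_le1 r : Fcdf P X r <= 1.
Proof. by rewrite -lee_fin FcdfE cdf_le1. Qed.

Lemma Fcdf_nondecreasing : nondecreasing_fun (Fcdf P X).
Proof. by move=> r s rs; rewrite -lee_fin !FcdfE cdf_nondecreasing. Qed.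

Lemma measurable_Fcdf : measurable_fun setT (Fcdf P X).
Proof. exact: nondecreasing_measurable Fcdf_nondecreasing. Qed.

Lemma Fcdf_near1 eta : 0 < eta -> exists M, 1 - eta <= Fcdf P X M.
Proof.
move=> eta_gt0; have lt1 : ((1 - eta)%:E < 1)%E by rewrite lte_fin gtrBl.
have [M /= /ltW] := @filter_ex _ (pinfty_nbhs R) _ _ (cvg_cdfy1 XRV (open_ereal_gt' lt1)).
by exists M; rewrite -lee_fin FcdfE.
Qed.

End cdf_of_measurable_function.

Section probability_integral_bounds.
Context d (T : measurableType d) (R : realType) (P : probability T R).
Local Open Scope ereal_scope.

Lemma integral_le1 (f : T -> R) : measurable_fun setT f ->
  (forall w, 0 <= f w <= 1)%R -> \int[P]_w (f w)%:E <= 1.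
Proof.
move=> mf f01; apply: (@le_trans _ _ (\int[P]_w (cst 1 w))).
  2: by rewrite integral_cst//= probability_setT mul1e.
apply: ge0_le_integral => //.
- by move=> w _; rewrite lee_fin; case/andP: (f01 w).
- exact/measurable_EFinP.
- by move=> w _; rewrite lee_fin; case/andP: (f01 w).
Qed.

Lemma integral_integral_maxr_le1 (a : T -> R) : measurable_fun setT a ->
  (forall w, 0 <= a w <= 1)%R ->
  \int[P]_w \int[P]_w' (Num.max (a w) (a w'))%:E <= 1.
Proof.
move=> ma a01; have a0 w : (0 <= a w)%R by case/andP: (a01 w).
apply: (@le_trans _ _ (\int[P]_w (cst 1 w))).
  2: by rewrite integral_cst//= probability_setT mul1e.
apply: ge0_le_integral => //.
- by move=> w _; apply: integral_ge0 => w' _; rewrite lee_fin le_max a0.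
- apply: (measurable_fun_fubini_tonelli_F (fun z => (Num.max (a z.1) (a z.2))%:E)).
    apply/measurable_EFinP; apply: measurable_maxr.
      exact: measurableT_comp ma measurable_fst.
    exact: measurableT_comp ma measurable_snd.
  by move=> z; rewrite lee_fin le_max a0.
- move=> w _; apply: integral_le1.
    by apply: measurable_maxr => //; exact: measurable_cst.
  move=> w'; rewrite le_max a0 ge_max.
  by case/andP: (a01 w) => _ ->; case/andP: (a01 w') => _ ->.
Qed.

Lemma tail_integral_ge (Y h : T -> R) (M c eta : R) :
  measurable_fun setT Y -> measurable_fun setT h ->
  (forall w, 0 <= h w)%R -> (0 <= c)%R -> (forall w, M < Y w -> c <= h w)%R ->
  P [set w | Y w <= M]%R <= eta%:E ->
  (c * (1 - eta))%:E <= \int[P]_w (h w)%:E.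
Proof.
move=> mY mh h0 c0 ch PYM.
have mYM : measurable [set w | Y w <= M]%R.
  have -> : [set w | Y w <= M]%R = Y @^-1` `]-oo, M].
    by apply/seteqP; split => w /=; rewrite in_itv.
  by rewrite -[Y @^-1` _]setTI; exact: mY.
have mE : measurable (~` [set w | Y w <= M]%R) by exact: measurableC.
have PE : (1 - eta)%:E <= P (~` [set w | Y w <= M]%R).
  by rewrite probability_setC// EFinB leeB.
apply: (@le_trans _ _ (\int[P]_(w in ~` [set w | Y w <= M]%R) (h w)%:E)); last first.
  apply: ge0_subset_integral => //; first exact/measurable_EFinP.
  by move=> w _; rewrite lee_fin.
rewrite EFinM; apply: (@le_trans _ _ (c%:E * P (~` [set w | Y w <= M]%R))).
  by rewrite lee_wpmul2l// lee_fin.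
rewrite -integral_cst//; apply: ge0_le_integral => //.
- by apply/measurable_EFinP; exact: measurable_funTS.
- by move=> w /= /negP; rewrite -ltNge lee_fin; exact: ch.
Qed.

End probability_integral_bounds.

Lemma measurable_Xhat d (T : measurableType d) (R : realType) (n : nat)
    (Xn : T -> n.-tuple R) (g : n.-tuple R * n.-tuple R -> R)
    (Lam : set (n.-tuple R)) (l : n.-tuple R) :
  measurable_fun setT Xn -> measurable_on (Lam `*` setT) g -> Lam l ->
  measurable_fun setT (Xhat g Xn l).
Proof.
move=> mXn mg Ll _ B mB; have [C [mC gBC]] := mg B mB.
have -> : setT `&` Xhat g Xn l @^-1` B = setT `&` (fun w => (l, Xn w)) @^-1` C.
  apply/seteqP; split => w [_ Bw]; split => //=.
    have : ((Lam `*` setT) `&` g @^-1` B) (l, Xn w) by split.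
    by rewrite gBC => -[].
  have : ((Lam `*` setT) `&` C) (l, Xn w) by split.
  by rewrite -gBC => -[].
by apply: measurable_fun_pair => //; exact: measurable_cst.
Qed.

Section Phi_lower_bound.
Context d (T : measurableType d) (R : realType) (P : probability T R) (n : nat)
  (X : T -> R) (Xn : T -> n.-tuple R) (g : n.-tuple R * n.-tuple R -> R)
  (l : n.-tuple R) (eta M : R).
Hypotheses (mX : measurable_fun setT X) (mY : measurable_fun setT (Xhat g Xn l))
  (eta_ge0 : 0 <= eta) (eta_le1 : eta <= 1) (FM_ge : 1 - eta <= Fcdf P X M).
Local Open Scope ereal_scope.
Hypothesis PYM : P [set w | Xhat g Xn l w <= M]%R <= eta%:E.

Let Y := Xhat g Xn l.

Let mFY : measurable_fun setT (fun w => Fcdf P X (Y w)).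
Proof. exact: measurableT_comp (measurable_Fcdf P mX) mY. Qed.

Let FY01 w : (0 <= Fcdf P X (Y w) <= 1)%R.
Proof. by rewrite Fcdf_ge0 ?Fcdf_le1. Qed.

Lemma Phi1_ge : ((1 - eta) ^+ 2)%:E <= Phi1 P X Xn g l.
Proof.
apply: le_trans (tail_integral_ge mY _ _ (Fcdf_ge0 P mX M) _ PYM).
- by rewrite lee_fin expr2; apply: ler_wpM2r; rewrite // subr_ge0.
- exact: measurableT_comp (measurable_Fcdf P mX) (measurable_maxr mX mY).
- by move=> w; exact: Fcdf_ge0.
- move=> w /ltW MY; apply: Fcdf_nondecreasing => //.
  by rewrite le_max MY orbT.
Qed.

Lemma integral_Fcdf_sqr_ge :
  ((1 - eta) ^+ 3)%:E <= \int[P]_w ((Fcdf P X (Y w)) ^+ 2)%:E.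
Proof.
have F0 := Fcdf_ge0 P mX M.
apply: le_trans (tail_integral_ge mY _ _ (sqr_ge0 (Fcdf P X M)) _ PYM).
- rewrite lee_fin exprSr; apply: ler_wpM2r; first by rewrite subr_ge0.
  by rewrite lerXn2r// nnegrE subr_ge0.
- exact: measurable_funX.
- by move=> w; exact: sqr_ge0.
- move=> w /ltW /(Fcdf_nondecreasing P mX) FMY.
  by rewrite lerXn2r// ?nnegrE// Fcdf_ge0.
Qed.

Lemma Phi2_ge : (2 * (1 - eta) ^+ 2 - 1)%:E <= Phi2 P X Xn g l.
Proof.
rewrite /Phi2 EFinB EFinM; apply: leeB; last exact: integral_le1.
by apply: lee_wpmul2l; [rewrite lee_fin | exact: Phi1_ge].
Qed.

Lemma Phi3_ge gamma : (0 <= gamma)%R ->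
  (2 * (1 - eta) ^+ 2 - 1 + gamma * ((1 - eta) ^+ 3 - 1))%:E
    <= Phi3 P gamma X Xn g l.
Proof.
move=> gamma_ge0; rewrite /Phi3 EFinD; apply: leeD; first exact: Phi2_ge.
rewrite EFinM; apply: lee_wpmul2l; first by rewrite lee_fin.
rewrite EFinB; apply: leeB; first exact: integral_Fcdf_sqr_ge.
exact: integral_integral_maxr_le1.
Qed.

Lemma Phi_ge j gamma : (0 <= gamma)%R ->
  (1 - (4 + 3 * gamma) * eta)%:E <= Phi P j gamma X Xn g l.
Proof.
(* [nra] does not see section hypotheses. *)
move=> gamma_ge0; move: eta_ge0 eta_le1 => e0 e1.
have cube : (1 - 3 * eta <= (1 - eta) ^+ 3)%R.
  by rewrite !exprS expr0 mulr1; nra.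
case: j => [|[|[|j]]] /=.
- apply: le_trans (Phi3_ge gamma_ge0); rewrite lee_fin; nra.
- apply: le_trans Phi1_ge; rewrite lee_fin expr2; nra.
- apply: le_trans Phi2_ge; rewrite lee_fin expr2; nra.
- apply: le_trans (Phi3_ge gamma_ge0); rewrite lee_fin; nra.
Qed.

End Phi_lower_bound.

Lemma Phi_eventually_ge d (T : measurableType d) (R : realType) (P : probability T R)
    (n : nat) (X : T -> R) (Xn : T -> n.-tuple R) (g : n.-tuple R * n.-tuple R -> R)
    (lam : nat -> n.-tuple R) (j : nat) (gamma : R) (v : \bar R) :
  measurable_fun setT X -> (forall k, measurable_fun setT (Xhat g Xn (lam k))) ->
  0 <= gamma -> (v < 1)%E ->
  (forall M, P [set w | Xhat g Xn (lam k) w <= M] @[k --> \oo] --> 0%E) ->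
  \forall k \near \oo, (v <= Phi P j gamma X Xn g (lam k))%E.
Proof.
move=> mX mY gamma_ge0 v_lt1 PYM_cvg0.
have [c [c_lt1 vc]] : exists c : R, c < 1 /\ (v <= c%:E)%E.
  case: v v_lt1 => [r r_lt1||_]; [by exists r | by [] | by exists 0; rewrite leNye].
have pos : 0 < 4 + 3 * gamma by lra.
pose eta := Num.min ((1 - c) / (4 + 3 * gamma)) 1.
have eta_gt0 : 0 < eta by rewrite lt_min ltr01 divr_gt0 ?subr_gt0.
have eta_le1 : eta <= 1 by rewrite ge_min lexx orbT.
have c_le : c <= 1 - (4 + 3 * gamma) * eta.
  have : eta <= (1 - c) / (4 + 3 * gamma) by rewrite ge_min lexx.
  by rewrite ler_pdivlMr // => ?; lra.
have [M FM_ge] := Fcdf_near1 P mX eta_gt0.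
have eta_gt0E : (0 < eta%:E)%E by rewrite lte_fin.
have PYM_lt : \forall k \near \oo, (P [set w | (Xhat g Xn (lam k) w <= M)%R] < eta%:E)%E.
  exact: PYM_cvg0 M _ (open_ereal_lt' eta_gt0E).
apply: filterS PYM_lt => k /ltW PYM.
apply: le_trans vc (le_trans _ (Phi_ge mX (mY k) (ltW eta_gt0) eta_le1 FM_ge PYM j gamma_ge0)).
by rewrite lee_fin.
Qed.

Section infimum_on_a_ball.
Context (U : Type) (R : realType) (A : set U) (N : U -> R) (f : U -> \bar R).

Lemma ge_beyond_radius (v : \bar R) :
  (forall lam : nat -> U, (forall k, A (lam k)) -> N (lam k) @[k --> \oo] --> +oo ->
     \forall k \near \oo, (v <= f (lam k))%E) ->
  exists M : R, forall l, A l -> M < N l -> (v <= f l)%E.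
Proof.
move=> ev_ge; apply: contrapT => /forallNP no_radius.
have escape (k : nat) : exists l, A l /\ k%:R < N l /\ (f l < v)%E.
  have /existsNP [l /not_implyP [Al /not_implyP [kN /negP]]] := no_radius k%:R.
  by rewrite -ltNge => flv; exists l.
have [lam lamP] := choice escape.
have Alam k : A (lam k) by case: (lamP k).
have Nlam : N (lam k) @[k --> \oo] --> +oo.
  apply/cvgryPge => r; apply: filterS (nbhs_infty_ger r) => k rk.
  by case: (lamP k) => _ [/ltW kN _]; exact: le_trans kN.
have [k /= vf] := filter_ex (ev_ge lam Alam Nlam).
by case: (lamP k) => _ [_]; rewrite ltNge vf.
Qed.

Lemma ereal_inf_ball (l0 : U) (M r : R) : A l0 ->
  (forall l, A l -> M < N l -> (f l0 <= f l)%E) -> M <= r -> N l0 <= r ->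
  ereal_inf (f @` A) = ereal_inf (f @` (A `&` [set l | N l <= r])).
Proof.
move=> Al0 ge_beyond Mr l0r; apply/eqP; rewrite eq_le; apply/andP; split.
  by apply: ereal_inf_le_tmp => _ [l [Al _] <-]; exists l.
apply: le_ereal_inf_tmp => _ [l Al <-].
have [lr|rl] := leP (N l) r; first by apply: ereal_inf_lbound; exists l.
apply: le_trans (ge_beyond l Al (le_lt_trans Mr rl)).
by apply: ereal_inf_lbound; exists l0.
Qed.

End infimum_on_a_ball.

Theorem mainTheorem11 (d : measure_display) (T : measurableType d) (R : realType)
  (P : probability T R) (n : nat) (X : T -> R) (Xn : T -> n.-tuple R)
  (Lam : set (n.-tuple R)) (g : n.-tuple R * n.-tuple R -> R)
  (gamma : R) (j : nat) :
  measurable_fun setT X ->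
  measurable_fun setT Xn ->
  continuous (Fcdf P X) ->
  measurable_on (Lam `*` setT) g ->
  0 < gamma ->
  (1 <= j <= 3)%N ->
  (exists l0, Aset P j X Xn g Lam l0 /\ (Phi P j gamma X Xn g l0 < 1)%E) ->
  (forall lam : nat -> n.-tuple R,
     (forall k, Aset P j X Xn g Lam (lam k)) ->
     enorm (lam k) @[k --> \oo] --> +oo ->
     forall M : R, P [set w | Xhat g Xn (lam k) w <= M] @[k --> \oo] --> 0%E) ->
  exists M : R, 0 < M /\
    ereal_inf [set Phi P j gamma X Xn g l | l in Aset P j X Xn g Lam] =
    ereal_inf [set Phi P j gamma X Xn g l |
                 l in Aset P j X Xn g Lam `&` [set l | enorm l <= M]].
Proof.
move=> mX mXn _ mg gamma_gt0 _ [l0 [Al0 Phil0_lt1]] escape.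
set A := Aset P j X Xn g Lam; set f := Phi P j gamma X Xn g.
have A_Lam : A `<=` Lam by rewrite /A /Aset; case: ifP => _ // l [].
have [M geM] : exists M : R, forall l, A l -> M < enorm l -> (f l0 <= f l)%E.
  apply: ge_beyond_radius => lam Alam lam_oo.
  apply: Phi_eventually_ge Phil0_lt1 (escape lam Alam lam_oo) => //; last exact: ltW.
  by move=> k; exact: measurable_Xhat mXn mg (A_Lam _ (Alam k)).
exists (Num.max 1 (Num.max M (enorm l0))); split; first by rewrite lt_max ltr01.
by apply: ereal_inf_ball Al0 geM _ _; rewrite !le_max lexx ?orbT.
Qed.
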